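(* For every formula $\phi$, $\mathbf{GLP}\vdash[1]\phi$ if and only if $\mathbf{GLP}\vdash\phi\leftrightarrow(Q_k(\phi)\to\phi)$ for some $k\geq 1$.
   Context: $\mathbf{GLP}$ is the propositional polymodal logic with modalities $[0],[1],\dots$ ($\langle k\rangle:=\neg[k]\neg$) axiomatized by classical tautologies; $[k](\phi\to\psi)\to([k]\phi\to[k]\psi)$; $[k]([k]\phi\to\phi)\to[k]\phi$; $\langle j\rangle\phi\to[k]\langle j\rangle\phi$ for $j<k$; $[j]\phi\to[k]\phi$ for $j\leq k$; rules modus ponens and necessitation. Define $Q_1(\phi):=\phi$ and $Q_{i+1}(\phi):=\phi\lor[0]Q_i(\phi)$. *)

From Stdlib Require Import Arith.

Inductive form : Type :=
| Var : nat -> form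
| Bot : form
| Imp : form -> form -> form
| Box : nat -> form -> form.

Definition Neg (a : form) : form := Imp a Bot.
Definition Top : form := Neg Bot.
Definition Or (a b : form) : form := Imp (Neg a) b.
Definition And (a b : form) : form := Neg (Imp a (Neg b)).
Definition Iff (a b : form) : form := And (Imp a b) (Imp b a).
Definition Dia (k : nat) (a : form) : form := Neg (Box k (Neg a)).

(* Propositional valuation semantics, used to define classical tautologies
   (boxed subformulas are treated as atoms). *)
Fixpoint tval (v : nat -> bool) (w : nat -> form -> bool) (a : form) : bool :=
  match a with
  | Var n => v n
  | Bot => false
  | Imp a b => implb (tval v w a) (tval v w b)
  | Box k b => w k b
  end.

Definition tautology (a : form) : Prop :=
  forall (v : nat -> bool) (w : nat -> form -> bool), tval v w a = true.

Inductive GLP : form -> Prop :=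
| glp_taut : forall a, tautology a -> GLP a
| glp_K : forall k a b, GLP (Imp (Box k (Imp a b)) (Imp (Box k a) (Box k b)))
| glp_Lob : forall k a, GLP (Imp (Box k (Imp (Box k a) a)) (Box k a))
| glp_dia : forall j k a, j < k -> GLP (Imp (Dia j a) (Box k (Dia j a)))
| glp_mono : forall j k a, j <= k -> GLP (Imp (Box j a) (Box k a))
| glp_mp : forall a b, GLP (Imp a b) -> GLP a -> GLP b
| glp_nec : forall k a, GLP a -> GLP (Box k a).

(* Q 1 phi = phi, Q (i+1) phi = phi \/ [0] (Q i phi), matching the paper's Q_i
   for i >= 1. Q 0 phi is set to phi but never used (statement requires k >= 1). *)
Fixpoint Q (i : nat) (a : form) : form :=
  match i with
  | 0 => a
  | 1 => a
  | S i' => Or a (Box 0 (Q i' a))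
  end.

From Stdlib Require Import Arith Lia Classical ClassicalEpsilon Cantor.

(* Since [phi -> Q_k phi] is a tautology, the right-hand side says that [Q_k phi] is provable.
   If it is, then [1](Q_k phi -> phi) (built from [1]([0]a -> a)) gives [1]phi.
   Conversely, [Q_{n+1} phi] is implied by the negation of the chain
   [~phi /\ <0>(~phi /\ <0>( ... ~phi))] with n diamonds.  If no [Q_k phi] is provable,
   all these chains are consistent, and iterated Lindenbaum extensions yield maximal
   consistent sets D_0, D_1, ... containing [~phi] with [[0]x in D_{k+1} -> x in D_k].
   A point placed at the limit of this chain, seeing every D_k through [0] and the tails
   of the chain through [1], validates GLP; so a proof of [1]phi would put [phi] into
   some D_k, next to [~phi]. *)

Ltac taut :=
  let v := fresh "v" in let w := fresh "w" in
  unfold tautology; intros v w; unfold Iff, And, Or, Dia, Top, Neg; simpl;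
  repeat match goal with
  | |- context [tval v w ?x] => destruct (tval v w x)
  | |- context [w ?k ?x] => destruct (w k x)
  end; reflexivity.

Ltac prop := apply glp_taut; taut.

(* [mp_from h1; ...; mp_from hn; prop] derives a propositional consequence of the
   theorems [h1 ... hn]. *)
Ltac mp_from h := refine (glp_mp _ _ _ h).

Lemma box_mp k a b : GLP (Box k (Imp a b)) -> GLP (Box k a) -> GLP (Box k b).
Proof. intros Hab Ha. exact (glp_mp _ _ (glp_mp _ _ (glp_K k a b) Hab) Ha). Qed.

Lemma box_monotone k a b : GLP (Imp a b) -> GLP (Imp (Box k a) (Box k b)).
Proof. intro H. exact (glp_mp _ _ (glp_K k a b) (glp_nec k _ H)). Qed.

Lemma dia_monotone k a b : GLP (Imp a b) -> GLP (Imp (Dia k a) (Dia k b)).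
Proof.
  intro H. assert (Hneg : GLP (Imp (Neg b) (Neg a))) by (mp_from H; prop).
  mp_from (box_monotone k _ _ Hneg); prop.
Qed.

Lemma dia_or k a b c : GLP (Imp a (Or b c)) -> GLP (Imp (Dia k a) (Or (Dia k b) (Dia k c))).
Proof.
  intro H.
  assert (Hneg : GLP (Box k (Imp (Neg b) (Imp (Neg c) (Neg a))))) by (apply glp_nec; mp_from H; prop).
  mp_from (glp_mp _ _ (glp_K k _ _) Hneg); mp_from (glp_K k (Neg c) (Neg a)); prop.
Qed.

Lemma box_trans k a : GLP (Imp (Box k a) (Box k (Box k a))).
Proof.
  assert (Hbox : GLP (Imp (Box k (And a (Box k a))) (Box k a))) by (apply box_monotone; prop).
  assert (Hstep : GLP (Imp a (Imp (Box k (And a (Box k a))) (And a (Box k a)))))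
    by (mp_from Hbox; prop).
  assert (Hout : GLP (Imp (Box k (And a (Box k a))) (Box k (Box k a)))) by (apply box_monotone; prop).
  mp_from (box_monotone k _ _ Hstep); mp_from (glp_Lob k (And a (Box k a))); mp_from Hout; prop.
Qed.

Lemma box1_box0_reflection a : GLP (Box 1 (Imp (Box 0 a) a)).
Proof.
  assert (Hdn : GLP (Imp (Box 0 a) (Box 0 (Neg (Neg a))))) by (apply box_monotone; prop).
  assert (Hdn' : GLP (Imp (Box 0 (Neg (Neg a))) (Box 0 a))) by (apply box_monotone; prop).
  assert (Hpos : GLP (Imp (Box 0 a) (Box 1 (Imp (Box 0 a) a)))).
  { mp_from (glp_mono 0 1 a (Nat.le_0_l 1)).
    mp_from (box_monotone 1 a (Imp (Box 0 a) a) ltac:(prop)); prop. }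
  assert (Hneg : GLP (Imp (Dia 0 (Neg a)) (Box 1 (Imp (Box 0 a) a)))).
  { assert (H : GLP (Imp (Dia 0 (Neg a)) (Imp (Box 0 a) a))) by (mp_from Hdn; prop).
    mp_from (glp_dia 0 1 (Neg a) Nat.lt_0_1); mp_from (box_monotone 1 _ _ H); prop. }
  mp_from Hpos; mp_from Hneg; mp_from Hdn'; prop.
Qed.

Lemma box1_Q_imp phi k : GLP (Box 1 (Imp (Q (S k) phi) phi)).
Proof.
  induction k as [|k IH].
  - apply glp_nec; prop.
  - change (Q (S (S k)) phi) with (Or phi (Box 0 (Q (S k) phi))).
    refine (box_mp _ _ _ (box_mp _ _ _ _ IH) (box1_box0_reflection (Q (S k) phi))).
    apply glp_nec; prop.
Qed.

Definition consistent (a : form) : Prop := ~ GLP (Neg a).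

Lemma consistent_mono a b : GLP (Imp a b) -> consistent a -> consistent b.
Proof. intros Hab Ha Hb. apply Ha. mp_from Hab; mp_from Hb; prop. Qed.

Lemma consistent_or a b : consistent (Or a b) -> consistent a \/ consistent b.
Proof.
  intro Hab. apply NNPP. intros [Ha Hb]%not_or_and.
  apply NNPP in Ha, Hb. apply Hab. mp_from Ha; mp_from Hb; prop.
Qed.

Fixpoint dia_chain (psi : form) (n : nat) (a : form) : form :=
  match n with
  | 0 => a
  | S n => And psi (Dia 0 (dia_chain psi n a))
  end.

(* [a] can consistently sit at the bottom of [<0>]-chains of [psi]-worlds of any length. *)
Definition chain_consistent (psi a : form) : Prop :=
  forall n, consistent (dia_chain psi n a).

Lemma dia_chain_mono psi n a b :
  GLP (Imp a b) -> GLP (Imp (dia_chain psi n a) (dia_chain psi n b)).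
Proof.
  intro Hab. induction n as [|n IH]; simpl; [exact Hab|].
  mp_from (dia_monotone 0 _ _ IH); prop.
Qed.

Lemma dia_chain_or psi n a b :
  GLP (Imp (dia_chain psi n (Or a b)) (Or (dia_chain psi n a) (dia_chain psi n b))).
Proof.
  induction n as [|n IH]; simpl; [prop|].
  mp_from (dia_or 0 _ _ _ IH); prop.
Qed.

Lemma dia_chain_shift psi n a :
  dia_chain psi n (And psi (Dia 0 a)) = dia_chain psi (S n) a.
Proof. induction n as [|n IH]; simpl; [reflexivity|]. now rewrite IH. Qed.

Lemma consistent_dia_chain_le psi m n a :
  m <= n -> consistent (dia_chain psi n a) -> consistent (dia_chain psi m a).
Proof.
  induction 1 as [|n _ IH]; [easy|]. intros Hcons. apply IH. intro Hincons.
  apply Hcons. simpl. mp_from (glp_nec 0 _ Hincons); prop.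
Qed.

Lemma chain_consistent_mono psi a b :
  GLP (Imp a b) -> chain_consistent psi a -> chain_consistent psi b.
Proof. intros Hab Ha n. exact (consistent_mono _ _ (dia_chain_mono psi n _ _ Hab) (Ha n)). Qed.

Lemma chain_consistent_or psi a b :
  chain_consistent psi (Or a b) -> chain_consistent psi a \/ chain_consistent psi b.
Proof.
  intro Hab. apply NNPP. intros [Ha Hb]%not_or_and.
  apply not_all_ex_not in Ha as [na Ha], Hb as [nb Hb].
  pose proof (consistent_mono _ _ (dia_chain_or psi (max na nb) a b) (Hab (max na nb))) as Hor.
  destruct (consistent_or _ _ Hor) as [H | H].
  - exact (Ha (consistent_dia_chain_le _ _ _ _ (Nat.le_max_l na nb) H)).
  - exact (Hb (consistent_dia_chain_le _ _ _ _ (Nat.le_max_r na nb) H)).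
Qed.

Lemma not_chain_consistent_bot psi : ~ chain_consistent psi Bot.
Proof. intro H. apply (H 0). prop. Qed.

Lemma chain_consistent_step psi a :
  chain_consistent psi a -> chain_consistent psi (And psi (Dia 0 a)).
Proof. intros Ha n. rewrite dia_chain_shift. apply Ha. Qed.

Lemma Q_of_inconsistent_chain phi n :
  GLP (Imp (Neg (dia_chain (Neg phi) n (Neg phi))) (Q (S n) phi)).
Proof.
  induction n as [|n IH]; [prop|].
  change (Q (S (S n)) phi) with (Or phi (Box 0 (Q (S n) phi))).
  mp_from (box_monotone 0 _ _ IH). simpl. prop.
Qed.

Record prime (P : form -> Prop) : Prop := {
  prime_mono : forall a b, GLP (Imp a b) -> P a -> P b;
  prime_or : forall a b, P (Or a b) -> P a \/ P b;
  prime_not_bot : ~ P Bot }.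

Lemma chain_consistent_prime psi : prime (chain_consistent psi).
Proof.
  split; [apply chain_consistent_mono | apply chain_consistent_or | apply not_chain_consistent_bot].
Qed.

Record maximal_consistent (T : form -> Prop) : Prop := {
  mc_theorem : forall a, GLP a -> T a;
  mc_mp : forall a b, T (Imp a b) -> T a -> T b;
  mc_complete : forall a, T a \/ T (Neg a);
  mc_not_bot : ~ T Bot }.

Section MaximalConsistent.
Variable T : form -> Prop.
Hypothesis T_mc : maximal_consistent T.

Lemma mc_imp a b : GLP (Imp a b) -> T a -> T b.
Proof. intro Hab. apply (mc_mp _ T_mc), (mc_theorem _ T_mc), Hab. Qed.

Lemma mc_imp2 a b c : GLP (Imp a (Imp b c)) -> T a -> T b -> T c.
Proof. intros Habc Ha. apply (mc_mp _ T_mc), (mc_imp _ _ Habc Ha). Qed.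

Lemma mc_not_both a : T a -> T (Neg a) -> False.
Proof. intros Ha Hna. apply (mc_not_bot _ T_mc), (mc_imp2 a (Neg a)); [prop | exact Ha | exact Hna]. Qed.

End MaximalConsistent.

Fixpoint encode (f : form) : nat :=
  match f with
  | Var n => to_nat (0, n)
  | Bot => to_nat (1, 0)
  | Imp a b => to_nat (2, to_nat (encode a, encode b))
  | Box k a => to_nat (3, to_nat (k, encode a))
  end.

Lemma to_nat_inj p q : to_nat p = to_nat q -> p = q.
Proof. intro H. now rewrite <- (cancel_of_to p), <- (cancel_of_to q), H. Qed.

Lemma encode_inj f g : encode f = encode g -> f = g.
Proof.
  revert g. induction f as [n| |a IHa b IHb|k a IHa]; intros [m| |c d|l c] H;
    cbn [encode] in H; apply to_nat_inj in H; try discriminate H.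
  - now injection H as ->.
  - reflexivity.
  - apply (f_equal snd) in H; cbn [snd] in H; apply to_nat_inj in H. injection H as Hac Hbd.
    now rewrite (IHa _ Hac), (IHb _ Hbd).
  - apply (f_equal snd) in H; cbn [snd] in H; apply to_nat_inj in H. injection H as -> Hac. now rewrite (IHa _ Hac).
Qed.

Definition decode (n : nat) : form := epsilon (inhabits Bot) (fun f => encode f = n).

Lemma decode_encode f : decode (encode f) = f.
Proof. apply encode_inj, (epsilon_spec (inhabits Bot) (fun g => encode g = encode f)). now exists f. Qed.

Fixpoint lindenbaum_stage (P : form -> Prop) (s : form) (n : nat) : form :=
  match n with
  | 0 => s
  | S n =>
      let t := lindenbaum_stage P s n in
      if excluded_middle_informative (P (And t (decode n)))
      then And t (decode n) else And t (Neg (decode n))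
  end.

Definition lindenbaum (P : form -> Prop) (s : form) (x : form) : Prop :=
  exists n, GLP (Imp (lindenbaum_stage P s n) x).

Section Lindenbaum.
Variables (P : form -> Prop) (s : form).
Hypotheses (P_prime : prime P) (P_seed : P s).

Lemma lindenbaum_stage_P n : P (lindenbaum_stage P s n).
Proof.
  induction n as [|n IH]; simpl; [exact P_seed|].
  set (t := lindenbaum_stage P s n).
  destruct (excluded_middle_informative (P (And t (decode n)))) as [H | H]; [exact H|].
  assert (Hsplit : P (Or (And t (decode n)) (And t (Neg (decode n))))).
  { apply (prime_mono _ P_prime t); [prop | exact IH]. }
  destruct (prime_or _ P_prime _ _ Hsplit); tauto.
Qed.

Lemma lindenbaum_stage_antitone m n :
  m <= n -> GLP (Imp (lindenbaum_stage P s n) (lindenbaum_stage P s m)).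
Proof.
  induction 1 as [|n _ IH]; [prop|].
  mp_from IH. simpl. destruct (excluded_middle_informative _); prop.
Qed.

Lemma lindenbaum_stage_decides x :
  GLP (Imp (lindenbaum_stage P s (S (encode x))) x) \/
  GLP (Imp (lindenbaum_stage P s (S (encode x))) (Neg x)).
Proof.
  cbn [lindenbaum_stage]. rewrite decode_encode.
  destruct (excluded_middle_informative _); [left | right]; prop.
Qed.

Lemma lindenbaum_mc : maximal_consistent (lindenbaum P s).
Proof.
  split.
  - intros a Ha. exists 0. mp_from Ha; prop.
  - intros a b [n Hab] [m Ha]. exists (max n m).
    mp_from (lindenbaum_stage_antitone _ _ (Nat.le_max_l n m)).
    mp_from (lindenbaum_stage_antitone _ _ (Nat.le_max_r n m)).
    mp_from Hab; mp_from Ha; prop.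
  - intro a. destruct (lindenbaum_stage_decides a) as [H | H]; [left | right]; eexists; exact H.
  - intros [n Hbot]. apply (prime_not_bot _ P_prime).
    exact (prime_mono _ P_prime _ _ Hbot (lindenbaum_stage_P n)).
Qed.

Lemma lindenbaum_seed : lindenbaum P s s.
Proof. exists 0. prop. Qed.

Lemma lindenbaum_sub x : lindenbaum P s x -> P x.
Proof. intros [n Hx]. exact (prime_mono _ P_prime _ _ Hx (lindenbaum_stage_P n)). Qed.

End Lindenbaum.

(* Formulas true at a [psi]-world that sees all of [Delta] through [<0>]. *)
Definition above (psi : form) (Delta : form -> Prop) (a : form) : Prop :=
  forall d, Delta d -> chain_consistent psi (And a (Dia 0 d)).

Section Above.
Variables (psi : form) (Delta : form -> Prop).
Hypotheses (Delta_mc : maximal_consistent Delta)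
           (Delta_cc : forall d, Delta d -> chain_consistent psi d).

Lemma above_prime : prime (above psi Delta).
Proof.
  split.
  - intros a b Hab Ha d Hd. apply (chain_consistent_mono _ (And a (Dia 0 d))); [|exact (Ha d Hd)].
    mp_from Hab; prop.
  - intros a b Hab. apply NNPP. intros [Ha Hb]%not_or_and.
    apply not_all_ex_not in Ha as [da Ha], Hb as [db Hb].
    apply imply_to_and in Ha as [Hda Ha], Hb as [Hdb Hb].
    set (d := And da db).
    assert (Hd : Delta d) by (apply (mc_imp2 _ Delta_mc da db); [prop | exact Hda | exact Hdb]).
    assert (Hsplit : chain_consistent psi (Or (And a (Dia 0 d)) (And b (Dia 0 d)))).
    { apply (chain_consistent_mono _ (And (Or a b) (Dia 0 d))); [prop | exact (Hab d Hd)]. }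
    assert (Hda' : GLP (Imp (Dia 0 d) (Dia 0 da))) by (apply dia_monotone; prop).
    assert (Hdb' : GLP (Imp (Dia 0 d) (Dia 0 db))) by (apply dia_monotone; prop).
    destruct (chain_consistent_or _ _ _ Hsplit) as [H | H].
    + apply Ha. refine (chain_consistent_mono _ _ _ _ H). mp_from Hda'; prop.
    + apply Hb. refine (chain_consistent_mono _ _ _ _ H). mp_from Hdb'; prop.
  - intro Hbot. apply (not_chain_consistent_bot psi).
    apply (chain_consistent_mono _ (And Bot (Dia 0 Top))); [prop|].
    apply Hbot, (mc_theorem _ Delta_mc). prop.
Qed.

Lemma above_seed : above psi Delta psi.
Proof. intros d Hd. exact (chain_consistent_step _ _ (Delta_cc d Hd)). Qed.

Lemma above_chain_consistent a : above psi Delta a -> chain_consistent psi a.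
Proof.
  intro Ha. apply (chain_consistent_mono _ (And a (Dia 0 Top))); [prop|].
  apply Ha, (mc_theorem _ Delta_mc). prop.
Qed.

Lemma above_box0 (Gamma : form -> Prop) x :
  (forall a, Gamma a -> above psi Delta a) -> Gamma (Box 0 x) -> Delta x.
Proof.
  intros Habove Hbox. destruct (mc_complete _ Delta_mc x) as [Hx | Hnx]; [exact Hx|].
  exfalso. apply (Habove _ Hbox _ Hnx 0). simpl.
  mp_from (box_monotone 0 x (Neg (Neg x)) ltac:(prop)); prop.
Qed.

End Above.

Fixpoint chain_pred (psi : form) (k : nat) : form -> Prop :=
  match k with
  | 0 => chain_consistent psi
  | S k => above psi (lindenbaum (chain_pred psi k) psi)
  end.

Definition mc_chain (psi : form) (k : nat) : form -> Prop := lindenbaum (chain_pred psi k) psi.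

Section Chain.
Variable psi : form.
Hypothesis psi_cc : chain_consistent psi psi.

Lemma chain_pred_spec k :
  prime (chain_pred psi k) /\ chain_pred psi k psi /\
  (forall a, chain_pred psi k a -> chain_consistent psi a).
Proof.
  induction k as [|k [Hprime [Hseed Hsub]]]; [split; [apply chain_consistent_prime | auto]|].
  pose proof (lindenbaum_mc _ _ Hprime Hseed) as Hmc.
  assert (Hcc : forall d, mc_chain psi k d -> chain_consistent psi d)
    by (intros d Hd; exact (Hsub d (lindenbaum_sub _ _ Hprime Hseed d Hd))).
  split; [|split].
  - exact (above_prime _ _ Hmc).
  - exact (above_seed _ _ Hcc).
  - exact (above_chain_consistent _ _ Hmc).
Qed.

Lemma mc_chain_mc k : maximal_consistent (mc_chain psi k).
Proof. destruct (chain_pred_spec k) as [Hprime [Hseed _]]. exact (lindenbaum_mc _ _ Hprime Hseed). Qed.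

Lemma mc_chain_seed k : mc_chain psi k psi.
Proof. apply lindenbaum_seed. Qed.

Lemma mc_chain_box0 k x : mc_chain psi (S k) (Box 0 x) -> mc_chain psi k x.
Proof.
  destruct (chain_pred_spec (S k)) as [Hprime [Hseed _]].
  apply (above_box0 psi _ (mc_chain_mc k)).
  exact (lindenbaum_sub _ _ Hprime Hseed).
Qed.

End Chain.

Definition eventually (P : nat -> Prop) : Prop := exists m, forall k, m <= k -> P k.

Lemma eventually_mono (P R : nat -> Prop) :
  (forall k, P k -> R k) -> eventually P -> eventually R.
Proof. intros HPR [m Hm]. exists m. auto. Qed.

Lemma eventually_mono2 (P P' R : nat -> Prop) :
  (forall k, P k -> P' k -> R k) -> eventually P -> eventually P' -> eventually R.
Proof.
  intros HR [m Hm] [m' Hm']. exists (max m m'). intros k Hk.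
  apply HR; [apply Hm | apply Hm']; lia.
Qed.

Section LimitValuation.
Variable D : nat -> form -> Prop.
Hypothesis D_mc : forall k, maximal_consistent (D k).
Hypothesis D_box0 : forall k x, D (S k) (Box 0 x) -> D k x.

Lemma D_box0_down k x : D (S k) (Box 0 x) -> D k (Box 0 x).
Proof. intro Hx. apply D_box0, (mc_imp _ (D_mc (S k)) _ _ (box_trans 0 x) Hx). Qed.

Lemma D_dia0_up k a : D k (Dia 0 a) -> D (S k) (Dia 0 a).
Proof.
  intro Ha. destruct (mc_complete _ (D_mc (S k)) (Dia 0 a)) as [H | H]; [exact H|].
  assert (Hbox : D (S k) (Box 0 (Neg a))) by (refine (mc_imp _ (D_mc (S k)) _ _ _ H); prop).
  exfalso. exact (mc_not_both _ (D_mc k) _ (D_box0_down k _ Hbox) Ha).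
Qed.

Lemma D_dia0_persist m k a : m <= k -> D m (Dia 0 a) -> D k (Dia 0 a).
Proof. induction 1; auto using D_dia0_up. Qed.

(* Truth at the limit point of the chain.  Variables are false there, an arbitrary
   choice: only boxed formulas are read off the chain. *)
Fixpoint holds (f : form) : Prop :=
  match f with
  | Var _ | Bot => False
  | Imp a b => holds a -> holds b
  | Box 0 a => forall k, D k (Box 0 a)
  | Box 1 a => eventually (fun k => D k a /\ D k (Box 1 a))
  | Box _ _ => True
  end.

Lemma holds_tautology f : tautology f -> holds f.
Proof.
  set (w k b := if excluded_middle_informative (holds (Box k b)) then true else false).
  assert (Htval : forall g, holds g <-> tval (fun _ => false) w g = true).
  { induction g as [n| |a IHa b IHb|k a _]; simpl.
    - split; [contradiction | discriminate].
    - split; [contradiction | discriminate].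
    - rewrite IHa, IHb. destruct (tval _ _ a), (tval _ _ b); simpl; intuition.
    - unfold w. destruct (excluded_middle_informative _); split; easy. }
  intro Hf. apply Htval, Hf.
Qed.

Lemma holds_K k a b : holds (Imp (Box k (Imp a b)) (Imp (Box k a) (Box k b))).
Proof.
  destruct k as [|[|k]]; simpl; [| |easy].
  - intros Hab Ha j. exact (mc_imp2 _ (D_mc j) _ _ _ (glp_K 0 a b) (Hab j) (Ha j)).
  - apply eventually_mono2. intros j [Hab Hbab] [Ha Hba]. split.
    + exact (mc_mp _ (D_mc j) _ _ Hab Ha).
    + exact (mc_imp2 _ (D_mc j) _ _ _ (glp_K 1 a b) Hbab Hba).
Qed.

Lemma holds_Lob k a : holds (Imp (Box k (Imp (Box k a) a)) (Box k a)).
Proof.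
  destruct k as [|[|k]]; simpl; [| |easy].
  - intros H j. exact (mc_imp _ (D_mc j) _ _ (glp_Lob 0 a) (H j)).
  - apply eventually_mono. intros j [Hstep Hbox].
    pose proof (mc_imp _ (D_mc j) _ _ (glp_Lob 1 a) Hbox) as Ha.
    split; [exact (mc_mp _ (D_mc j) _ _ Hstep Ha) | exact Ha].
Qed.

Lemma holds_dia j k a : j < k -> holds (Imp (Dia j a) (Box k (Dia j a))).
Proof.
  intro Hjk. destruct k as [|[|k]]; [lia| |simpl; easy].
  assert (j = 0) as -> by lia. simpl. intro Hdia.
  apply not_all_ex_not in Hdia as [m Hm].
  destruct (mc_complete _ (D_mc m) (Box 0 (Neg a))) as [H | Hdia]; [contradiction|].
  exists m. intros k Hk. pose proof (D_dia0_persist m k a Hk Hdia) as Hdia_k.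
  split; [exact Hdia_k | exact (mc_imp _ (D_mc k) _ _ (glp_dia 0 1 a Nat.lt_0_1) Hdia_k)].
Qed.

Lemma holds_mono j k a : j <= k -> holds (Imp (Box j a) (Box k a)).
Proof.
  intro Hjk. destruct k as [|[|k]]; [| |simpl; easy].
  - assert (j = 0) as -> by lia. simpl. easy.
  - destruct j as [|[|j]]; [|simpl; easy|lia].
    simpl. intro Hbox. exists 0. intros k _. split.
    + exact (D_box0 k a (Hbox (S k))).
    + exact (mc_imp _ (D_mc k) _ _ (glp_mono 0 1 a (Nat.le_0_l 1)) (Hbox k)).
Qed.

Lemma holds_nec k a : GLP a -> holds (Box k a).
Proof.
  intro Ha. destruct k as [|[|k]]; simpl; [| |easy].
  - intro j. exact (mc_theorem _ (D_mc j) _ (glp_nec 0 a Ha)).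
  - exists 0. intros j _.
    split; apply (mc_theorem _ (D_mc j)); [exact Ha | exact (glp_nec 1 a Ha)].
Qed.

Lemma holds_sound f : GLP f -> holds f.
Proof.
  induction 1.
  - now apply holds_tautology.
  - apply holds_K.
  - apply holds_Lob.
  - now apply holds_dia.
  - now apply holds_mono.
  - auto.
  - now apply holds_nec.
Qed.

Lemma box1_eventually a : GLP (Box 1 a) -> eventually (fun k => D k a).
Proof. intro H. exact (eventually_mono _ _ (fun k => @proj1 _ _) (holds_sound _ H)). Qed.

End LimitValuation.

Theorem mainTheorem16 : forall phi : form,
  GLP (Box 1 phi) <->
  exists k : nat, 1 <= k /\ GLP (Iff phi (Imp (Q k phi) phi)).
Proof.
  intro phi. split.
  - intro Hbox. apply NNPP. intro Hnone.
    assert (Hcc : chain_consistent (Neg phi) (Neg phi)).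
    { intros n Hincons. apply Hnone. exists (S n). split; [lia|].
      mp_from (glp_mp _ _ (Q_of_inconsistent_chain phi n) Hincons); prop. }
    destruct (box1_eventually _ (mc_chain_mc _ Hcc) (mc_chain_box0 _ Hcc) phi Hbox) as [m Hm].
    exact (mc_not_both _ (mc_chain_mc _ Hcc m) _ (Hm m (le_n m)) (mc_chain_seed _ m)).
  - intros [[|k] [Hk Hiff]]; [lia|].
    refine (box_mp _ _ _ _ (box1_Q_imp phi k)).
    apply glp_nec. mp_from Hiff; prop.
Qed.
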